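(* Let $r\geqslant2$ and let $\alpha:\mathrm{GL}_r(k_\mathrm{F})\to\mathrm{R}$ be a function such that $\alpha(ug)=\overline\psi(u)\alpha(g)$ for all $u\in\mathrm{U}_r(k_\mathrm{F})$, $g\in\mathrm{GL}_r(k_\mathrm{F})$. Then for all $g\in\mathrm{GL}_r(k_\mathrm{F})$, $$\frac{1}{|\mathrm{U}_r(k_\mathrm{F})|}\sum_{u\in\mathrm{U}_r(k_\mathrm{F})}\ \sum_{b\in\mathrm{B}^{\mathrm{op}}_{r-1}(k_\mathrm{F})}\overline\psi^{-1}(u)\,\alpha(bug)=\alpha(g).$$
   Context: $k_\mathrm{F}$ is a finite field of characteristic $p$ and $\mathrm{R}$ an algebraically closed field of characteristic $\ell\neq p$. $\mathrm{U}_r(k_\mathrm{F})$ is the group of upper unitriangular $r\times r$ matrices; $\overline\psi:k_\mathrm{F}\to\mathrm{R}^\times$ is a non-trivial character, and $\overline\psi(u):=\overline\psi(u_{1,2}+\dots+u_{r-1,r})$ for $u\in\mathrm{U}_r(k_\mathrm{F})$. $\mathrm{B}^{\mathrm{op}}_{r-1}(k_\mathrm{F})$ is the group of invertible lower triangular $(r-1)\times(r-1)$ matrices, viewed in $\mathrm{GL}_r(k_\mathrm{F})$ via $g\mapsto\mathrm{diag}(g,1)$ (for $r=2$, this is $\{\mathrm{diag}(a,1):a\in k_\mathrm{F}^\times\}$). *)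

From HB Require Import structures.
From mathcomp Require Import all_boot all_order all_algebra all_fingroup all_field.
Set Implicit Arguments. Unset Strict Implicit. Unset Printing Implicit Defensive.
Import GRing.Theory.
Local Open Scope ring_scope.

(* GL_r(kF) is represented by the invertible matrices g : 'M[kF]_r (g \in unitmx). *)

Definition unitri (F : finFieldType) (r : nat) : {set 'M[F]_r} :=
  [set u : 'M[F]_r | [forall i : 'I_r, forall j : 'I_r,
     if (i < j)%N then true else if i == j then u i j == 1 else u i j == 0]].

(* B^op_{r-1}(kF) embedded in GL_r(kF) via b |-> diag(b, 1): invertible lower
   triangular r x r matrices whose last row and last column coincide with
   those of the identity matrix. *)
Definition Bop_emb (F : finFieldType) (r : nat) : {set 'M[F]_r} :=
  [set b : 'M[F]_r | (b \in unitmx) &&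
     [forall i : 'I_r, forall j : 'I_r,
        [&& (i < j)%N ==> (b i j == 0),
            (i.+1 == r) ==> (b i j == (i == j)%:R)
          & (j.+1 == r) ==> (b i j == (i == j)%:R)]]].

Definition psibar (F : finFieldType) (R : fieldType) (psi : F -> R) (r : nat)
  (u : 'M[F]_r) : R :=
  psi (\sum_(i < r) \sum_(j < r | j == i.+1 :> nat) u i j).

From HB Require Import structures.
From mathcomp Require Import all_boot all_order all_algebra all_fingroup all_field all_solvable.
Import GRing.Theory.
Local Open Scope ring_scope.
Set Implicit Arguments. Unset Strict Implicit. Unset Printing Implicit Defensive.

(* Exchanging the two sums, the term b = 1 contributes |U| alpha(g), and |U|
   is a power of p, hence invertible in R.  Every other b in B^op dies: let k
   be the last row of b that differs from the identity (k < r - 1 since the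
   last row of b is trivial) and i <= k a column where it differs.  For
   u0 = 1 + x E_(i,k+1) one has b u0 = u1 b with u1 = 1 + x b E_(i,k+1) again
   unitriangular (column k+1 of b E_(i,k+1) is column i of b, which is trivial
   below row k), and psibar(u1) = psi(y) psibar(u0) for y = x (b_(k,i) -
   delta_(k,i)).  Substituting u -> u0 u then multiplies the inner sum by
   psi(y), which can be made different from 1. *)

Section UnitriangularMatrices.
Variables (F : finFieldType) (r : nat).
Implicit Types (u v : 'M[F]_r) (i j : 'I_r).

Lemma unitriP u :
  reflect (forall i j, (j <= i)%N -> u i j = (i == j)%:R) (u \in unitri F r).
Proof.
rewrite inE; apply: (iffP forallP) => [Hu i j ji | Hu i].
  move/forallP: (Hu i) => /(_ j); rewrite ltnNge ji /=.
  by case: eqP => [->|_] /eqP ->.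
apply/forallP => j; case: ltnP => // ji; rewrite Hu //.
by case: eqP.
Qed.

Lemma ord_ltn_eqF i j : (i < j)%N -> (i == j) = false.
Proof. by move=> ij; apply/negbTE; apply: contraTneq ij => ->; rewrite ltnn. Qed.

Lemma unitri_lower u i j : u \in unitri F r -> (j < i)%N -> u i j = 0.
Proof. by move/unitriP => Hu ji; rewrite Hu ?(ltnW ji) // eq_sym ord_ltn_eqF. Qed.

Lemma unitri_diag u i : u \in unitri F r -> u i i = 1.
Proof. by move/unitriP => Hu; rewrite Hu ?eqxx. Qed.

Lemma unitri_mulmx u v : u \in unitri F r -> v \in unitri F r -> u *m v \in unitri F r.
Proof.
move=> Hu Hv; apply/unitriP => i j ji; rewrite mxE.
case: (eqVneq i j) => [<- | neq_ij].
  rewrite (bigD1 i) //= !unitri_diag // mul1r big1 ?addr0 // => k ki.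
  case: (ltnP k i) => [lt_ki | le_ik]; first by rewrite unitri_lower ?mul0r.
  by rewrite (unitri_lower Hv) ?mulr0 // ltn_neqAle le_ik andbT eq_sym.
rewrite big1 // => k _.
case: (ltnP k i) => [lt_ki | le_ik]; first by rewrite unitri_lower ?mul0r.
rewrite (unitri_lower Hv) ?mulr0 //.
by apply: leq_trans le_ik; rewrite ltn_neqAle ji andbT eq_sym.
Qed.

Lemma unitri_unitmx u : u \in unitri F r -> u \in unitmx.
Proof.
move=> Hu; rewrite unitmxE -det_tr det_trig.
  by rewrite big1 ?unitr1 // => i _; rewrite mxE unitri_diag.
by apply/is_trig_mxP => i j ij; rewrite mxE unitri_lower.
Qed.

Lemma sum_unitri_mull (V : nmodType) (f : 'M[F]_r -> V) u0 :
  u0 \in unitri F r ->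
  \sum_(u in unitri F r) f (u0 *m u) = \sum_(u in unitri F r) f u.
Proof.
move=> u0U; have inj_u0 : injective (@mulmx F r r r u0) := can_inj (mulKmx (unitri_unitmx u0U)).
have im_u0 : [set u0 *m u | u in unitri F r] = unitri F r.
  apply/eqP; rewrite eqEcard (card_imset _ inj_u0) leqnn andbT.
  by apply/subsetP => _ /imsetP [u uU ->]; exact: unitri_mulmx.
by rewrite -{2}im_u0 big_imset //= => v w _ _; exact: inj_u0.
Qed.

Definition upper_pairs : pred ('I_r * 'I_r) := fun ij => (ij.1 < ij.2)%N.

Lemma card_unitri : #|unitri F r| = (#|F| ^ #|upper_pairs|)%N.
Proof.
pose of_entries (f : {ffun 'I_r * 'I_r -> F}) : 'M[F]_r :=
  \matrix_(i, j) (if (i < j)%N then f (i, j) else (i == j)%:R).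
have -> : unitri F r = [set of_entries f | f in pffun_on 0 upper_pairs predT].
  apply/setP => u; apply/idP/imsetP => [Hu | [f _ ->]]; last first.
    by apply/unitriP => i j ji; rewrite mxE ltnNge ji.
  exists [ffun ij : 'I_r * 'I_r => if (ij.1 < ij.2)%N then u ij.1 ij.2 else 0].
    apply/pffun_onP; split => //.
    by apply/supportP => ij nij; rewrite ffunE ifF //; exact: negbTE.
  apply/matrixP => i j; rewrite !mxE ffunE /=; case: ltnP => // ji.
  by move/unitriP: Hu => ->.
rewrite card_in_imset ?card_pffun_on ?card_predT //.
move=> f1 f2 /pffun_onP [/supportP s1 _] /pffun_onP [/supportP s2 _] e12.
apply/ffunP => [[i j]]; case: (boolP ((i, j) \in upper_pairs)) => ij; last by rewrite s1 ?s2.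
have := congr1 (fun M : 'M[F]_r => M i j) e12.
by rewrite !mxE /= -[(i < j)%N]/((i, j) \in upper_pairs) ij.
Qed.

Definition superdiag_sum (M : 'M[F]_r) : F :=
  \sum_(i < r) \sum_(j < r | j == i.+1 :> nat) M i j.

Lemma superdiag_sumD (A B : 'M[F]_r) :
  superdiag_sum (A + B) = superdiag_sum A + superdiag_sum B.
Proof.
rewrite /superdiag_sum -big_split; apply: eq_bigr => i _.
by rewrite -big_split; apply: eq_bigr => j _; rewrite mxE.
Qed.

Lemma superdiag_sumZ x (A : 'M[F]_r) : superdiag_sum (x *: A) = x * superdiag_sum A.
Proof.
rewrite /superdiag_sum mulr_sumr; apply: eq_bigr => i _.
by rewrite mulr_sumr; apply: eq_bigr => j _; rewrite mxE.
Qed.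

Lemma superdiag_sum1 : superdiag_sum 1%:M = 0.
Proof.
rewrite /superdiag_sum big1 // => i _; rewrite big1 // => j /eqP ji.
by rewrite mxE ord_ltn_eqF // ji.
Qed.

Lemma superdiag_sum_col (M : 'M[F]_r) (k k' : 'I_r) : k' = k.+1 :> nat ->
  (forall a j, j != k' -> M a j = 0) -> superdiag_sum M = M k k'.
Proof.
move=> kk' HM; rewrite /superdiag_sum (bigD1 k) //= (bigD1 k') ?kk' //= big1 ?addr0.
  rewrite big1 ?addr0 // => a ak; rewrite big1 // => j /eqP ja; apply: HM.
  by apply: contra ak => /eqP jk'; apply/eqP/val_inj/succn_inj; rewrite -ja jk'.
by move=> j /andP [_ jk']; exact: HM.
Qed.

Lemma superdiag_sum_mul u v : u \in unitri F r -> v \in unitri F r ->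
  superdiag_sum (u *m v) = superdiag_sum u + superdiag_sum v.
Proof.
move=> Hu Hv; rewrite /superdiag_sum -big_split; apply: eq_bigr => i _.
rewrite -big_split; apply: eq_bigr => j /eqP ji; rewrite mxE.
have lt_ij : (i < j)%N by rewrite ji.
rewrite (bigD1 i) //= (bigD1 j) /=; last by rewrite eq_sym ord_ltn_eqF.
rewrite !unitri_diag // mul1r mulr1 big1 ?addr0 1?addrC // => k /andP [ki kj].
case: (ltnP k i) => [lt_ki | le_ik]; first by rewrite unitri_lower ?mul0r.
have lt_ik : (i < k)%N by rewrite ltn_neqAle le_ik andbT eq_sym.
have neq_jk : val j != val k by rewrite eq_sym.
by rewrite (unitri_lower Hv) ?mulr0 // ltn_neqAle neq_jk ji.
Qed.

Lemma Bop_emb1 : 1%:M \in Bop_emb F r.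
Proof.
rewrite inE unitmx1; apply/forallP => i; apply/forallP => j; rewrite !mxE.
by apply/and3P; split; apply/implyP => // ij; rewrite ord_ltn_eqF.
Qed.

Lemma Bop_emb_last_nontrivial_row b : b \in Bop_emb F r -> b != 1%:M ->
  exists i k k' : 'I_r, [/\ (i <= k)%N, k' = k.+1 :> nat, b k i != (k == i)%:R
    & forall m j : 'I_r, (k < m)%N -> b m j = (m == j)%:R].
Proof.
rewrite inE => /andP [_ /forallP Hb] nb1.
pose nontrivial m := [exists j, b m j != (m == j)%:R].
have [m0 Pm0] : exists m0, nontrivial m0.
  apply/existsP; apply: contraR nb1 => /existsPn Hrows; apply/eqP/matrixP => a c.
  by move: (Hrows a) => /existsPn /(_ c); rewrite negbK mxE => /eqP.
case: (arg_maxnP (fun m : 'I_r => val m) Pm0) => k /existsP [i bki] kmax.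
move/forallP: (Hb k) => /(_ i) /and3P [/implyP bup /implyP blast _].
have ik : (i <= k)%N.
  rewrite leqNgt; apply/negP => ki; move: bki.
  by rewrite (eqP (bup ki)) eq_sym ord_ltn_eqF // eqxx.
have kr : (k.+1 < r)%N.
  rewrite ltn_neqAle ltn_ord andbT; apply/negP => /eqP kr.
  by move: bki; rewrite (eqP (blast (introT eqP kr))) eqxx.
exists i, k, (Ordinal kr); split => // m j km.
apply/eqP; apply: contraTT km => bmj; rewrite -leqNgt; apply: kmax.
by apply/existsP; exists j.
Qed.

Lemma mulmx_delta_entry (b : 'M[F]_r) (i k a c : 'I_r) :
  (b *m delta_mx i k) a c = b a i * (c == k)%:R.
Proof.
rewrite mxE (bigD1 i) //= big1 ?addr0; first by rewrite mxE eqxx.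
by move=> m mi; rewrite mxE (negbTE mi) mulr0.
Qed.

Lemma Bop_emb_twist b y : b \in Bop_emb F r -> b != 1%:M ->
  exists u0 u1, [/\ u0 \in unitri F r, u1 \in unitri F r, b *m u0 = u1 *m b
    & superdiag_sum u1 = y + superdiag_sum u0].
Proof.
move=> Bb nb1.
have [i [k [k' [ik kk' bki brows]]]] := Bop_emb_last_nontrivial_row Bb nb1.
have ik' : (i < k')%N by rewrite kk' ltnS.
pose c := b k i - (k == i)%:R; pose x := y / c; pose D : 'M[F]_r := delta_mx i k'.
have c0 : c != 0 by rewrite subr_eq0.
exists (1%:M + x *: D), (1%:M + x *: (b *m D)); split.
- apply/unitriP => a e ea; rewrite !mxE.
  case: (eqVneq a i) => [ai | _]; last by rewrite mulr0 addr0.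
  case: (eqVneq e k') => [ek | _]; last by rewrite andbF mulr0 addr0.
  by move: ea; rewrite ai ek leqNgt ik'.
- apply/unitriP => a e ea; rewrite mxE [in X in _ + X]mxE mulmx_delta_entry mxE.
  case: (eqVneq e k') => [ek | _]; last by rewrite !mulr0 addr0.
  have ka : (k < a)%N by rewrite -ltnS -kk' -ek.
  by rewrite brows // (eq_sym a i) (ord_ltn_eqF (leq_ltn_trans ik ka)) mul0r mulr0 addr0.
- have DbD : D *m b = D.
    apply/matrixP => a e; rewrite mxE (bigD1 k') //= big1 ?addr0.
      by rewrite brows ?kk' // !mxE eqxx andbT; case: (a == i); rewrite ?mul1r ?mul0r // eq_sym.
    by move=> m mk; rewrite !mxE (negbTE mk) andbF mul0r.
  by rewrite mulmxDr mulmxDl mulmx1 mul1mx -scalemxAr -scalemxAl -mulmxA DbD.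
have sdD : superdiag_sum D = (k == i)%:R.
  rewrite (superdiag_sum_col kk') ?mxE ?eqxx ?andbT // => a j jk.
  by rewrite mxE (negbTE jk) andbF.
have sdbD : superdiag_sum (b *m D) = b k i.
  rewrite (superdiag_sum_col kk') ?mulmx_delta_entry ?eqxx ?mulr1 // => a j jk.
  by rewrite mulmx_delta_entry (negbTE jk) mulr0.
rewrite !superdiag_sumD superdiag_sum1 !add0r !superdiag_sumZ sdD sdbD.
by rewrite -[b k i](subrK (k == i)%:R) mulrDr -/c divfK.
Qed.

End UnitriangularMatrices.

Lemma natr_card_finField_neq0 (F : finFieldType) (R : idomainType) p :
  p \in [pchar F] -> p \notin [pchar R] -> (#|F|%:R : R) != 0.
Proof.
move=> pF pR; have p_prime : prime p := pcharf_prime pF.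
have p_neq0 : (p%:R : R) != 0 by move: pR; rewrite inE p_prime.
have /card_pgroup := abelem_pgroup (fin_ring_pchar_abelem pF).
by rewrite cardsT => ->; rewrite natrX expf_neq0.
Qed.

Section TwistedSums.
Variables (F : finFieldType) (R : fieldType) (psi : F -> R) (r : nat).
Hypothesis psi_unit : forall x, psi x != 0.
Hypothesis psi_add : forall x y, psi (x + y) = psi x * psi y.
Variable alpha : 'M[F]_r -> R.
Hypothesis alpha_equiv : forall u g, u \in unitri F r -> g \in unitmx ->
  alpha (u *m g) = psibar psi u * alpha g.

Lemma psibar_mul u v : u \in unitri F r -> v \in unitri F r ->
  psibar psi (u *m v) = psibar psi u * psibar psi v.
Proof. by move=> uU vU; rewrite /psibar -/(superdiag_sum _) superdiag_sum_mul ?psi_add. Qed.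

Lemma twisted_sum_eq0 b g y : psi y != 1 -> b \in Bop_emb F r -> b != 1%:M ->
  g \in unitmx ->
  \sum_(u in unitri F r) (psibar psi u)^-1 * alpha (b *m u *m g) = 0.
Proof.
move=> psiy1 Bb nb1 gU.
have bU : b \in unitmx by move: Bb; rewrite inE => /andP [].
have [u0 [u1 [u0U u1U bu0 sdu1]]] := Bop_emb_twist y Bb nb1.
have psibar_u1 : psibar psi u1 = psi y * psibar psi u0.
  by rewrite /psibar -/(superdiag_sum u1) sdu1 psi_add.
have shift u : u \in unitri F r ->
    (psibar psi (u0 *m u))^-1 * alpha (b *m (u0 *m u) *m g)
    = psi y * ((psibar psi u)^-1 * alpha (b *m u *m g)).
  move=> uU; rewrite mulmxA bu0 -!mulmxA alpha_equiv //; last first.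
    by rewrite !unitmx_mul bU unitri_unitmx.
  rewrite psibar_mul // psibar_u1 invfM mulrACA [_^-1 * (psi y * _)]mulrCA mulVf ?mulr1 //.
  exact: psi_unit.
set S := \sum_(u in unitri F r) _.
have /eqP : S = psi y * S by rewrite {1}/S -(sum_unitri_mull _ u0U) (eq_bigr _ shift) -mulr_sumr.
rewrite -subr_eq0 -{1}(mul1r S) -mulrBl mulf_eq0 subr_eq0 eq_sym (negbTE psiy1).
by move/eqP.
Qed.

End TwistedSums.

Theorem mainTheorem12
  (kF : finFieldType) (R : closedFieldType) (p : nat)
  (hp : p \in [pchar kF]) (hl : p \notin [pchar R])
  (psi : kF -> R)
  (psi_unit : forall x, psi x != 0)
  (psi_add : forall x y, psi (x + y) = psi x * psi y)
  (psi_nontriv : exists x, psi x != 1)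
  (r : nat) (hr : (2 <= r)%N)
  (alpha : 'M[kF]_r -> R)
  (halpha : forall u g, u \in unitri kF r -> g \in unitmx ->
     alpha (u *m g) = psibar psi u * alpha g) :
  forall g : 'M[kF]_r, g \in unitmx ->
    (#|unitri kF r|%:R)^-1 *
      \sum_(u in unitri kF r) \sum_(b in Bop_emb kF r)
        (psibar psi u)^-1 * alpha (b *m u *m g)
    = alpha g.
Proof.
move=> g gU; have [y psiy1] := psi_nontriv.
rewrite exchange_big /= (bigD1 1%:M) ?Bop_emb1 //= [X in _ + X]big1 ?addr0; last first.
  by move=> b /andP [Bb nb1]; exact: twisted_sum_eq0 psiy1 Bb nb1 gU.
rewrite (eq_bigr (fun _ => alpha g)) => [|u uU]; last by rewrite mul1mx halpha // mulKf //; exact: psi_unit.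
have cardU_neq0 : (#|unitri kF r|%:R : R) != 0.
  by rewrite card_unitri natrX expf_neq0 // (natr_card_finField_neq0 hp hl).
by rewrite sumr_const -[alpha g *+ _]mulr_natl (mulKf cardU_neq0).
Qed.
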